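(* Let $H$ be a connected graph, $G_n$ a graph, $p_n\in(0,1)$ with $\mathrm{Var}[T(H,G_n)]>0$, and $M>0$. Then (a) $\mathbb P(T(H,G_n)\ne T_M^\circ(H,G_n))\le\frac{2^{|V(H)|}-1}{M(1-p_n)}$; (b) $\frac{1}{\sqrt{\mathrm{Var}[T(H,G_n)]}}\mathbb E|T(H,G_n)-T_M^\circ(H,G_n)|\le\frac{2^{|V(H)|}-1}{\sqrt M(1-p_n)}$.
   Context: $G_n$ is a simple labeled graph on $V(G_n)=\{1,\dots,|V(G_n)|\}$ with adjacency $(a_{ij})$; $H=(V(H),E(H))$ with $|Aut(H)|$ automorphisms. $V(G_n)_k$ is the set of $k$-tuples of distinct vertices, $\bar{\mathbf s}$ the set of entries. $M_H(\mathbf s)=\prod_{(i,j)\in E(H)}a_{s_is_j}$, $t_H(A)=\frac1{|Aut(H)|}\sum_{\mathbf s:\bar{\mathbf s}\supseteq A}M_H(\mathbf s)$. $\{X_v\}$ i.i.d. Bernoulli$(p_n)$, $X_{\mathbf s}=\prod_uX_{s_u}$, $T(H,G_n)=\frac1{|Aut(H)|}\sum_{\mathbf s}M_H(\mathbf s)X_{\mathbf s}$. For $M>0$, $\mathcal C_M(A)$ is the condition $t_H(A)^2>Mp_n^{2|A|-2|V(H)|}\mathrm{Var}[T(H,G_n)]$, and $\mathbf 1\{\mathcal C_M(\mathbf s)\}=1$ iff $\mathcal C_M(A)$ fails for all nonempty $A\subseteq\bar{\mathbf s}$. $T_M^\circ(H,G_n)=\frac1{|Aut(H)|}\sum_{\mathbf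 s\in V(G_n)_{|V(H)|}}M_H(\mathbf s)X_{\mathbf s}\mathbf 1\{\mathcal C_M(\mathbf s)\}$. *)

(* Discrete probability over the finite sample space
   {ffun 'I_N -> bool} of vertex indicators. *)
From HB Require Import structures.
From mathcomp Require Import all_boot all_order all_algebra all_fingroup.
From mathcomp Require Import reals.
Set Implicit Arguments. Unset Strict Implicit. Unset Printing Implicit Defensive.
Import Order.TTheory GRing.Theory Num.Theory.
Local Open Scope ring_scope.

Section Defs.
Context {R : realType}.

Definition simple_graph n (e : rel 'I_n) : Prop :=
  (forall i j, e i j = e j i) /\ (forall i, e i i = false).

Definition connected_graph n (e : rel 'I_n) : Prop :=
  (0 < n)%N /\ (forall i j, fingraph.connect e i j).

Variables (k N : nat) (h : rel 'I_k) (e : rel 'I_N) (p M : R).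

Definition autH : nat :=
  #|[set s : {perm 'I_k} | [forall i, forall j, h (s i) (s j) == h i j]]|.

Definition adj (i j : 'I_N) : R := (e i j)%:R.

Definition MH (s : {ffun 'I_k -> 'I_N}) : R :=
  \prod_(i : 'I_k) \prod_(j : 'I_k | (i < j)%N && h i j) adj (s i) (s j).

Definition entries (s : {ffun 'I_k -> 'I_N}) : {set 'I_N} := [set s i | i : 'I_k].

Definition tH (A : {set 'I_N}) : R :=
  (autH%:R)^-1 * \sum_(s : {ffun 'I_k -> 'I_N} | injectiveb s && (A \subset entries s)) MH s.

Definition prob (w : {ffun 'I_N -> bool}) : R :=
  \prod_(v : 'I_N) (if w v then p else 1 - p).

Definition Ex (f : {ffun 'I_N -> bool} -> R) : R := \sum_w prob w * f w.

Definition Pr (E : pred {ffun 'I_N -> bool}) : R := \sum_(w | E w) prob w.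

Definition Xs (w : {ffun 'I_N -> bool}) (s : {ffun 'I_k -> 'I_N}) : R :=
  \prod_(u : 'I_k) (w (s u))%:R.

Definition T (w : {ffun 'I_N -> bool}) : R :=
  (autH%:R)^-1 * \sum_(s : {ffun 'I_k -> 'I_N} | injectiveb s) MH s * Xs w s.

Definition VarT : R := Ex (fun w => (T w - Ex T) ^+ 2).

Definition CM (A : {set 'I_N}) : bool :=
  M * p ^ ((2 * #|A|)%:Z - (2 * k)%:Z) * VarT < tH A ^+ 2.

Definition goodM (s : {ffun 'I_k -> 'I_N}) : bool :=
  [forall A : {set 'I_N}, ((A != set0) && (A \subset entries s)) ==> ~~ CM A].

Definition Tcirc (w : {ffun 'I_N -> bool}) : R :=
  (autH%:R)^-1 * \sum_(s : {ffun 'I_k -> 'I_N} | injectiveb s)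
                   MH s * Xs w s * (goodM s)%:R.

End Defs.

(* A copy s of H is dropped from T°_M only if some nonempty A inside its vertex
   set is bad, i.e. satisfies C_M(A).  So T <> T°_M forces some bad A to be fully
   active, and |T - T°_M| is at most the sum over bad A of the active copies
   containing A; taking expectations gives the bounds sum_A p^|A| and
   sum_A t_H(A) p^k over bad A.  Badness of A bounds each term by
   t_H(A)^2 p^(2k-|A|) divided by M Var resp. sqrt(M Var).  Finally, expanding
   t_H(A)^2 over pairs of copies (S, S'), the sum of t_H(A)^2 p^(2k-|A|) over all
   nonempty A is at most (2^k - 1)/(1 - p) Var T: a pair sharing j >= 1 vertices
   contributes at most (2^j - 1) p^|S u S'| on the left and, with the same
   weight, p^|S u S'| (1 - p^j) to the variance. *)

From HB Require Import structures.
From mathcomp Require Import all_boot all_order all_algebra all_fingroup.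
From mathcomp Require Import reals.
From mathcomp Require Import ring.
Import Order.TTheory GRing.Theory Num.Theory.
Local Open Scope ring_scope.
Set Implicit Arguments. Unset Strict Implicit. Unset Printing Implicit Defensive.

Section BernoulliProduct.
Context {R : realType}.
Variables (N : nat) (p : R).
Implicit Types (w : {ffun 'I_N -> bool}) (A B : {set 'I_N}).
Implicit Types (f g : {ffun 'I_N -> bool} -> R).

Definition Xset w A : R := (A \subset [set v | w v])%:R.

Lemma Xset_ge0 w A : 0 <= Xset w A.
Proof. exact: ler0n. Qed.

Lemma XsetU w A B : Xset w A * Xset w B = Xset w (A :|: B).
Proof. by rewrite /Xset subUset -natrM mulnb. Qed.

Lemma Xs_Xset k w (s : {ffun 'I_k -> 'I_N}) : Xs w s = Xset w (entries s).
Proof.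
rewrite /Xs /Xset.
have -> : (entries s \subset [set v | w v]) = [forall u, w (s u)].
  rewrite sub_imset_pre; apply/subsetP/forallP => [sw u | sw u _].
    by have := sw u; rewrite !inE; apply.
  by rewrite !inE.
case: (boolP [forall u, _]) => [/forallP sw | /forallPn[u /negbTE wu]].
  by rewrite big1 // => u _; rewrite sw.
by rewrite (bigD1 u) //= wu mul0r.
Qed.

Lemma ExD f g : Ex p (fun w => f w + g w) = Ex p f + Ex p g.
Proof. by rewrite /Ex -big_split; apply: eq_bigr => w _; rewrite mulrDr. Qed.

Lemma ExZ c f : Ex p (fun w => c * f w) = c * Ex p f.
Proof. by rewrite /Ex mulr_sumr; apply: eq_bigr => w _; rewrite mulrCA. Qed.

Lemma Ex_sum (I : finType) (P : pred I) (F : I -> {ffun 'I_N -> bool} -> R) :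
  Ex p (fun w => \sum_(i | P i) F i w) = \sum_(i | P i) Ex p (F i).
Proof. by rewrite /Ex exchange_big; apply: eq_bigr => w _; rewrite mulr_sumr. Qed.

(* Independence: a sum over outcomes of a product over vertices is the product
   over vertices of the per-vertex sums. *)
Lemma Ex_Xset A : Ex p (Xset^~ A) = p ^+ #|A|.
Proof.
pose q v (b : bool) : R := (if b then p else 1 - p) * (if v \in A then b%:R else 1).
transitivity (\sum_(w : {ffun 'I_N -> bool}) \prod_v q v (w v)).
  apply: eq_bigr => w _; rewrite big_split /=; congr (_ * _).
  rewrite /Xset; case: (boolP (A \subset _)) => [/subsetP Aw | /subsetPn[v vA]].
    by rewrite big1 // => v _; case: ifP => // /Aw; rewrite inE => ->.
  by rewrite inE => /negbTE wv; rewrite (bigD1 v) //= vA wv mul0r.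
rewrite -(bigA_distr_bigA q) -prodr_const [RHS]big_mkcond /=.
apply: eq_bigr => v _; rewrite big_bool /q /=.
by case: (v \in A); rewrite ?mulr1 ?mulr0 ?addr0 // addrC subrK.
Qed.

Lemma Ex1 : Ex p (fun _ : {ffun 'I_N -> bool} => 1) = 1.
Proof.
have := Ex_Xset set0; rewrite cards0 expr0 => {2}<-.
by apply: eq_bigr => w _; rewrite /Xset sub0set.
Qed.

Lemma Ex_sqr_centered f :
  Ex p (fun w => (f w - Ex p f) ^+ 2) = Ex p (fun w => f w ^+ 2) - Ex p f ^+ 2.
Proof.
transitivity (Ex p (fun w => f w ^+ 2 + (- (2 * Ex p f)) * f w + Ex p f ^+ 2 * 1)).
  by apply: eq_bigr => w _; congr (_ * _); ring.
by rewrite !ExD !ExZ Ex1; ring.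
Qed.

Lemma Ex_var_lincomb_Xset (I : finType) (P : pred I) (a : I -> R)
    (S : I -> {set 'I_N}) f :
  (forall w, f w = \sum_(i | P i) a i * Xset w (S i)) ->
  Ex p (fun w => (f w - Ex p f) ^+ 2) =
  \sum_(i | P i) \sum_(j | P j)
    a i * a j * (p ^+ #|S i :|: S j| - p ^+ #|S i| * p ^+ #|S j|).
Proof.
move=> fE; rewrite Ex_sqr_centered.
have -> : Ex p f = \sum_(i | P i) a i * p ^+ #|S i|.
  transitivity (Ex p (fun w => \sum_(i | P i) a i * Xset w (S i))).
    by apply: eq_bigr => w _; rewrite fE.
  by rewrite Ex_sum; apply: eq_bigr => i _; rewrite ExZ Ex_Xset.
have -> : Ex p (fun w => f w ^+ 2) =
    \sum_(i | P i) \sum_(j | P j) a i * a j * p ^+ #|S i :|: S j|.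
  transitivity (Ex p (fun w => \sum_(i | P i) \sum_(j | P j)
                                 a i * a j * Xset w (S i :|: S j))).
    apply: eq_bigr => w _; rewrite fE expr2 big_distrlr /=; congr (_ * _).
    by apply: eq_bigr => i _; apply: eq_bigr => j _; rewrite -XsetU; ring.
  rewrite Ex_sum; apply: eq_bigr => i _; rewrite Ex_sum.
  by apply: eq_bigr => j _; rewrite ExZ Ex_Xset.
rewrite expr2 big_distrlr /= -sumrB; apply: eq_bigr => i _.
by rewrite -sumrB; apply: eq_bigr => j _; ring.
Qed.

Lemma Pr_Ex (E : pred {ffun 'I_N -> bool}) : Pr p E = Ex p (fun w => (E w)%:R).
Proof.
rewrite /Pr /Ex big_mkcond; apply: eq_bigr => w _.
by case: (E w); rewrite ?mulr1 ?mulr0.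
Qed.

Hypothesis p01 : 0 <= p <= 1.

Lemma prob_ge0 w : 0 <= prob p w.
Proof.
case/andP: p01 => p0 p1.
by apply: prodr_ge0 => v _; case: (w v); rewrite ?subr_ge0.
Qed.

Lemma ler_Ex f g : (forall w, f w <= g w) -> Ex p f <= Ex p g.
Proof. by move=> fg; apply: ler_sum => w _; rewrite ler_wpM2l ?prob_ge0. Qed.

End BernoulliProduct.

Section NonemptySubsets.
Context {R : realType}.
Variables (T : finType) (p : R).
Implicit Types (A I : {set T}).

Lemma card_nonempty_subsets I :
  #|[pred A : {set T} | (A != set0) && (A \subset I)]| = (2 ^ #|I| - 1)%N.
Proof.
rewrite -card_powerset (cardsD1 set0) inE sub0set add1n subn1 /=.
by apply: eq_card => A; rewrite !inE.
Qed.

Lemma sum_nonempty_subsets_exp_le I m : 0 <= p <= 1 -> (#|I| <= m)%N ->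
  \sum_(A : {set T} | (A != set0) && (A \subset I)) p ^+ (m - #|A|)
  <= (2 ^ #|I| - 1)%:R * p ^+ (m - #|I|).
Proof.
move=> /andP[p0 p1] Im.
apply: (@le_trans _ _
  (\sum_(A : {set T} | (A != set0) && (A \subset I)) p ^+ (m - #|I|))).
  apply: ler_sum => A /andP[_ AI]; apply: ler_wiXn2l => //.
  by rewrite leq_sub2l // subset_leq_card.
by rewrite sumr_const card_nonempty_subsets mulr_natl.
Qed.

(* With j = |S :&: S'|, the left side is at most (2^j - 1) p^|S :|: S'|, while
   the covariance is p^|S :|: S'| (1 - p^j), and 1 - p^j >= 1 - p once j > 0. *)
Lemma sum_common_subsets_le_cov (S S' : {set T}) n :
    0 < p < 1 -> (#|S :&: S'| <= n)%N ->
  \sum_(A : {set T} | (A != set0) && (A \subset S :&: S')) p ^+ (#|S| + #|S'| - #|A|)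
  <= (2 ^ n - 1)%:R / (1 - p) * (p ^+ #|S :|: S'| - p ^+ #|S| * p ^+ #|S'|).
Proof.
move=> /andP[p0 p1] jn.
have q0 : 0 < 1 - p by rewrite subr_gt0.
have UI := cardsUI S S'.
set j := #|S :&: S'| in UI jn *; set u := #|S :|: S'| in UI *.
have p01 : 0 <= p <= 1 by rewrite !ltW.
have jS : (j <= #|S| + #|S'|)%N by rewrite -UI leq_addl.
apply: le_trans (sum_nonempty_subsets_exp_le p01 jS) _.
rewrite -UI addnK -exprD -UI exprD -/j.
have -> : (2 ^ n - 1)%:R / (1 - p) * (p ^+ u - p ^+ u * p ^+ j)
        = (2 ^ n - 1)%:R * (1 - p ^+ j) / (1 - p) * p ^+ u by ring.
apply: ler_wpM2r; first by rewrite exprn_ge0 ?ltW.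
rewrite ler_pdivlMr //.
case: (posnP j) => [-> | j_gt0]; first by rewrite subnn !mul0r mulr_ge0 ?ler0n ?subrr.
apply: ler_pM; rewrite ?ler0n ?(ltW q0) //.
  by rewrite ler_nat leq_sub2r // leq_pexp2l.
by rewrite lerB // ler_iXnr // ltW.
Qed.

End NonemptySubsets.

Section SubgraphCount.
Context {R : realType}.
Variables (k N : nat) (h : rel 'I_k) (e : rel 'I_N) (p : R).
Hypotheses (p_gt0 : 0 < p) (p_lt1 : p < 1).
Let p_ge0 : 0 <= p := ltW p_gt0.
Local Notation ktuple := {ffun 'I_k -> 'I_N}.
Implicit Types (s : ktuple) (A : {set 'I_N}) (w : {ffun 'I_N -> bool}).

Definition scaledMH s : R := (autH h)%:R^-1 * MH h e s.

Lemma scaledMH_ge0 s : 0 <= scaledMH s.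
Proof.
rewrite mulr_ge0 ?invr_ge0 ?ler0n //.
by apply: prodr_ge0 => i _; apply: prodr_ge0 => j _; apply: ler0n.
Qed.

Lemma card_entries s : injectiveb s -> #|entries s| = k.
Proof. by move/injectiveP => s_inj; rewrite card_imset // card_ord. Qed.

Lemma T_Xset w :
  T h e w = \sum_(s : ktuple | injectiveb s) scaledMH s * Xset w (entries s).
Proof. by rewrite /T mulr_sumr; apply: eq_bigr => s _; rewrite Xs_Xset mulrA. Qed.

Lemma VarT_cov : VarT h e p =
  \sum_(s : ktuple | injectiveb s) \sum_(s' : ktuple | injectiveb s')
    scaledMH s * scaledMH s' *
    (p ^+ #|entries s :|: entries s'| - p ^+ #|entries s| * p ^+ #|entries s'|).
Proof. exact: Ex_var_lincomb_Xset T_Xset. Qed.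

Lemma tH_sum A :
  tH h e A = \sum_(s : ktuple | injectiveb s) scaledMH s * (A \subset entries s)%:R.
Proof.
rewrite /tH mulr_sumr big_mkcondr /=; apply: eq_bigr => s _.
by case: (A \subset entries s); rewrite ?mulr1 ?mulr0.
Qed.

Lemma tH_ge0 A : (0 : R) <= tH h e A.
Proof. by rewrite tH_sum sumr_ge0 // => s _; rewrite mulr_ge0 ?scaledMH_ge0 ?ler0n. Qed.

Lemma tH_sqr A : tH h e A ^+ 2 =
  \sum_(s : ktuple | injectiveb s) \sum_(s' : ktuple | injectiveb s')
    scaledMH s * scaledMH s' * (A \subset entries s :&: entries s')%:R.
Proof.
rewrite tH_sum expr2 big_distrlr /=; apply: eq_bigr => s _; apply: eq_bigr => s' _.
by rewrite subsetI -mulnb natrM; ring.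
Qed.

Definition tH_weight A : R := tH h e A ^+ 2 * p ^+ (2 * k - #|A|).

Lemma tH_weight_mulXn A : (#|A| <= k)%N ->
  tH_weight A * p ^+ #|A| = tH h e A ^+ 2 * p ^+ (2 * k).
Proof. by move=> Ak; rewrite -mulrA -exprD subnK // (leq_trans Ak) // leq_pmull. Qed.

Lemma tH_weight_ge0 A : 0 <= tH_weight A.
Proof. by rewrite mulr_ge0 ?sqr_ge0 ?exprn_ge0. Qed.

Lemma sum_tH_weightE :
  \sum_(A : {set 'I_N} | A != set0) tH_weight A =
  \sum_(s : ktuple | injectiveb s) \sum_(s' : ktuple | injectiveb s')
    scaledMH s * scaledMH s' *
    \sum_(A : {set 'I_N} | (A != set0) && (A \subset entries s :&: entries s'))
      p ^+ (#|entries s| + #|entries s'| - #|A|).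
Proof.
rewrite /tH_weight; under eq_bigr => A _ do rewrite tH_sqr mulr_suml.
rewrite exchange_big; apply: eq_bigr => s s_inj.
under eq_bigr => A _ do rewrite mulr_suml.
rewrite exchange_big; apply: eq_bigr => s' s'_inj.
rewrite mulr_sumr big_mkcondr /= !card_entries // addnn -mul2n.
by apply: eq_bigr => A _; case: (A \subset _); rewrite ?mulr1 ?mulr0 ?mul0r.
Qed.

Lemma sum_tH_weight_le :
  \sum_(A : {set 'I_N} | A != set0) tH_weight A
  <= (2 ^ k - 1)%:R / (1 - p) * VarT h e p.
Proof.
rewrite sum_tH_weightE VarT_cov mulr_sumr; apply: ler_sum => s s_inj.
rewrite mulr_sumr; apply: ler_sum => s' s'_inj.
rewrite [leRHS]mulrCA; apply: ler_wpM2l; first by rewrite mulr_ge0 ?scaledMH_ge0.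
apply: sum_common_subsets_le_cov; first by rewrite p_gt0.
by rewrite -[leqRHS](card_entries s_inj) subset_leq_card ?subsetIl.
Qed.

Definition T_containing A w : R :=
  \sum_(s : ktuple | injectiveb s)
    scaledMH s * (A \subset entries s)%:R * Xset w (entries s).

Lemma Ex_T_containing A : Ex p (T_containing A) = tH h e A * p ^+ k.
Proof.
rewrite Ex_sum tH_sum mulr_suml; apply: eq_bigr => s s_inj.
by rewrite ExZ Ex_Xset card_entries.
Qed.

Variable M : R.

Definition badset A := (A != set0) && CM h e p M A.

Lemma goodMPn s :
  reflect (exists2 A, badset A & A \subset entries s) (~~ goodM h e p M s).
Proof.
rewrite /goodM negb_forall; apply: (iffP existsP) => [[A] | [A /andP[A0 bA] As]].
  by rewrite negb_imply negbK => /andP[/andP[A0 As] bA]; exists A; rewrite /badset ?A0.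
by exists A; rewrite negb_imply negbK A0 As.
Qed.

Lemma T_subB_Tcirc w : T h e w - Tcirc h e p M w =
  \sum_(s : ktuple | injectiveb s)
    scaledMH s * Xset w (entries s) * (~~ goodM h e p M s)%:R.
Proof.
rewrite /T /Tcirc -mulrBr -sumrB mulr_sumr; apply: eq_bigr => s _.
by rewrite Xs_Xset /scaledMH; case: goodM => /=; ring.
Qed.

Lemma T_neq_Tcirc_le w :
  (T h e w != Tcirc h e p M w)%:R <= \sum_(A : {set 'I_N} | badset A) Xset w A :> R.
Proof.
have sum_ge0 (B : pred {set 'I_N}) : 0 <= \sum_(A | B A) Xset w A :> R.
  by rewrite sumr_ge0 // => A _; apply: Xset_ge0.
case: (boolP [exists A, badset A && (A \subset [set v | w v])]).
  case/existsP=> A /andP[bA Aw]; rewrite (bigD1 A) //= {1}/Xset Aw.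
  by apply: (@le_trans _ _ 1); rewrite ?lern1 ?leq_b1 // lerDl sum_ge0.
move=> no_bad; suff -> : T h e w = Tcirc h e p M w by rewrite eqxx sum_ge0.
apply/eqP; rewrite -subr_eq0 T_subB_Tcirc big1 // => s _.
case: goodMPn => [[A bA As] | _]; last by rewrite mulr0.
suff -> : Xset w (entries s) = 0 :> R by rewrite mulr0 mul0r.
apply/eqP; rewrite pnatr_eq0 eqb0; apply: contra no_bad => Sw.
by apply/existsP; exists A; rewrite bA (subset_trans As Sw).
Qed.

Lemma normB_T_Tcirc_le w :
  `|T h e w - Tcirc h e p M w| <= \sum_(A : {set 'I_N} | badset A) T_containing A w.
Proof.
rewrite T_subB_Tcirc ger0_norm; last first.
  by apply: sumr_ge0 => s _; rewrite mulr_ge0 ?ler0n // mulr_ge0 ?scaledMH_ge0 ?Xset_ge0.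
rewrite /T_containing exchange_big /=; apply: ler_sum => s _.
under eq_bigr => A _ do rewrite mulrAC.
rewrite -mulr_sumr; apply: ler_wpM2l; first by rewrite mulr_ge0 ?scaledMH_ge0 ?Xset_ge0.
case: goodMPn => [[A bA As] | _]; last by rewrite sumr_ge0 // => A _; apply: ler0n.
by rewrite (bigD1 A) //= As lerDl sumr_ge0 // => B _; apply: ler0n.
Qed.

Hypotheses (VarT_gt0 : 0 < VarT h e p) (M_gt0 : 0 < M).

Lemma badset_card A : badset A -> (#|A| <= k)%N.
Proof.
case/andP=> _; apply: contraTT; rewrite -ltnNge => kA.
rewrite /CM; have -> : tH h e A = 0 :> R.
  rewrite tH_sum big1 // => s s_inj; apply/eqP; rewrite mulf_eq0 pnatr_eq0 eqb0.
  apply/orP; right; apply: contraTN kA => /subset_leq_card.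
  by rewrite card_entries // -leqNgt.
by rewrite expr2 mul0r -leNgt !mulr_ge0 ?exprz_ge0 // ltW.
Qed.

Lemma badset_sqr A :
  badset A -> M * VarT h e p * p ^+ (2 * #|A|) < tH h e A ^+ 2 * p ^+ (2 * k).
Proof.
have pE : p ^ ((2 * #|A|)%:Z - (2 * k)%:Z) * p ^+ (2 * k) = p ^+ (2 * #|A|).
  by rewrite !exprnP -expfzDr ?lt0r_neq0 // subrK.
case/andP=> _; rewrite /CM -(ltr_pM2r (exprn_gt0 (2 * k) p_gt0)).
suff -> : M * p ^ ((2 * #|A|)%:Z - (2 * k)%:Z) * VarT h e p * p ^+ (2 * k)
        = M * VarT h e p * p ^+ (2 * #|A|) by [].
by rewrite -pE; ring.
Qed.

Lemma badset_exp_le A : badset A -> p ^+ #|A| <= tH_weight A / (M * VarT h e p).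
Proof.
move=> bA; have pA := exprn_gt0 #|A| p_gt0.
rewrite ler_pdivlMr ?mulr_gt0 // -(ler_pM2r pA) tH_weight_mulXn ?badset_card //.
have -> : p ^+ #|A| * (M * VarT h e p) * p ^+ #|A| = M * VarT h e p * p ^+ (2 * #|A|).
  by rewrite mul2n -addnn exprD; ring.
exact/ltW/badset_sqr.
Qed.

(* Both sides are compared after multiplication by p^|A|: this turns the claim
   into [Y * X <= Y^2] for [X = sqrt(M Var) p^|A| < Y = tH(A) p^k]. *)
Lemma badset_tH_le A :
  badset A -> tH h e A * p ^+ k <= tH_weight A / (Num.sqrt M * Num.sqrt (VarT h e p)).
Proof.
move=> bA; have pA := exprn_gt0 #|A| p_gt0.
have sMV : 0 < Num.sqrt M * Num.sqrt (VarT h e p) by rewrite mulr_gt0 ?sqrtr_gt0.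
set X := Num.sqrt M * Num.sqrt (VarT h e p) * p ^+ #|A|.
set Y := tH h e A * p ^+ k.
have X_ge0 : 0 <= X by rewrite mulr_ge0 ?exprn_ge0 // ltW.
have Y_ge0 : 0 <= Y by rewrite mulr_ge0 ?tH_ge0 ?exprn_ge0.
have X2 : X ^+ 2 = M * VarT h e p * p ^+ (2 * #|A|).
  by rewrite /X !exprMn !sqr_sqrtr ?(ltW M_gt0) ?(ltW VarT_gt0) // -exprM mulnC.
have Y2 : Y ^+ 2 = tH h e A ^+ 2 * p ^+ (2 * k).
  by rewrite /Y exprMn -exprM mulnC.
have XY : X <= Y.
  by rewrite -(ler_pXn2r (_ : 0 < 2)%N) ?nnegrE // X2 Y2 ltW // badset_sqr.
rewrite ler_pdivlMr // -(ler_pM2r pA) tH_weight_mulXn ?badset_card //.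
by rewrite -Y2 -mulrA -/X expr2 ler_wpM2l.
Qed.

Lemma sum_badset_le (f : {set 'I_N} -> R) c : 0 < c ->
    (forall A, badset A -> f A <= tH_weight A / c) ->
  \sum_(A : {set 'I_N} | badset A) f A <= (2 ^ k - 1)%:R / (1 - p) * VarT h e p / c.
Proof.
move=> c_gt0 f_le; apply: le_trans (ler_sum (index_enum _) f_le) _.
rewrite -mulr_suml; apply: ler_wpM2r; first by rewrite invr_ge0 ltW.
apply: le_trans sum_tH_weight_le.
rewrite big_mkcond [leRHS]big_mkcond; apply: ler_sum => A _.
rewrite /badset; case: (A != set0) => //=; case: CM => //.
exact: tH_weight_ge0.
Qed.

End SubgraphCount.

Theorem lemma5p2 (R : realType) (k N : nat) (h : rel 'I_k) (e : rel 'I_N) (p M : R) :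
  simple_graph h -> connected_graph h -> simple_graph e ->
  0 < p < 1 -> 0 < VarT h e p -> 0 < M ->
  Pr p (fun w => T h e w != Tcirc h e p M w)
    <= (2 ^ k - 1)%:R / (M * (1 - p)) /\
  (Num.sqrt (VarT h e p))^-1 * Ex p (fun w => `|T h e w - Tcirc h e p M w|)
    <= (2 ^ k - 1)%:R / (Num.sqrt M * (1 - p)).
Proof.
move=> _ _ _ /andP[p_gt0 p_lt1] V_gt0 M_gt0.
have p01 : 0 <= p <= 1 by rewrite !ltW.
have q_neq0 : 1 - p != 0 by rewrite subr_eq0 gt_eqF.
have sV_gt0 : 0 < Num.sqrt (VarT h e p) by rewrite sqrtr_gt0.
split.
- rewrite Pr_Ex; apply: le_trans (ler_Ex p01 (T_neq_Tcirc_le h e p M)) _.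
  rewrite Ex_sum (eq_bigr _ (fun A _ => Ex_Xset p A)).
  apply: le_trans (sum_badset_le p_gt0 p_lt1 (mulr_gt0 M_gt0 V_gt0)
                     (badset_exp_le p_gt0 V_gt0 M_gt0)) _.
  by rewrite le_eqVlt; apply/predU1l; field; rewrite q_neq0 !gt_eqF.
- rewrite -ler_pdivlMl ?invr_gt0 // invrK.
  apply: le_trans (ler_Ex p01 (normB_T_Tcirc_le h e p M)) _.
  rewrite Ex_sum (eq_bigr _ (fun A _ => Ex_T_containing h e p A)).
  apply: le_trans (sum_badset_le p_gt0 p_lt1 _
                     (badset_tH_le p_gt0 V_gt0 M_gt0)) _.
    by rewrite mulr_gt0 ?sqrtr_gt0.
  rewrite -{1}(sqr_sqrtr (ltW V_gt0)).
  by rewrite le_eqVlt; apply/predU1l; field; rewrite q_neq0 !gt_eqF ?sqrtr_gt0.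
Qed.
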